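(* Let $X\in\mathcal{M}(N,P)$, let $K$ be a positive integer with $K\le\min(N,P)$, and let $L\in\mathcal{M}(P,K)$ be arbitrary. Then $$\min_{Z\in\mathcal{S}(N,K)}\|X-ZL^T\|_F^2 \;=\; d_*(X^TX,\,LL^T)^2 .$$
   Context: $\mathcal{M}(N,K)$ denotes the set of real $N\times K$ matrices and $\mathcal{S}(N,K)=\{M\in\mathcal{M}(N,K): M^TM=I_K\}$ the set of $N\times K$ matrices with orthonormal columns. $\|A\|_F^2=\sum_{i,k}a_{i,k}^2$ is the squared Frobenius norm. For positive semi-definite matrices $A,B$ of the same size, $\sqrt{A}$ denotes the unique PSD square root, and the Bures–Wasserstein distance is $$d_*(A,B):=\Big(\operatorname{tr}(A)-2\operatorname{tr}\big(\sqrt{\sqrt{A}\,B\,\sqrt{A}}\big)+\operatorname{tr}(B)\Big)^{1/2}.$$ *)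

From HB Require Import structures.
From mathcomp Require Import all_boot all_order all_algebra.
From mathcomp Require Import boolp reals.
Set Implicit Arguments. Unset Strict Implicit. Unset Printing Implicit Defensive.
Import Order.TTheory GRing.Theory Num.Theory.
Local Open Scope ring_scope.

Definition frob2 (R : realType) (m n : nat) (A : 'M[R]_(m, n)) : R :=
  \sum_(i < m) \sum_(k < n) (A i k) ^+ 2.

Definition orthonormal_cols (R : realType) (m n : nat) (M : 'M[R]_(m, n)) : Prop :=
  M^T *m M = 1%:M.

Definition psd (R : realType) (n : nat) (A : 'M[R]_n) : Prop :=
  A^T = A /\ forall v : 'cV[R]_n, 0 <= (v^T *m A *m v) 0 0.

(* the (unique) PSD square root of A; chosen by classical choice,
   defaults to 0 if A has no PSD square root (i.e. A not PSD) *)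
Definition psd_sqrt (R : realType) (n : nat) (A : 'M[R]_n) : 'M[R]_n :=
  match pselect (exists B : 'M[R]_n, psd B /\ B *m B = A) with
  | left h => projT1 (cid h)
  | right _ => 0
  end.

Definition bw_dist (R : realType) (n : nat) (A B : 'M[R]_n) : R :=
  Num.sqrt (\tr A
            - 2 * \tr (psd_sqrt (psd_sqrt A *m B *m psd_sqrt A))
            + \tr B).

From HB Require Import structures.
From mathcomp Require Import all_boot all_order all_algebra.
From mathcomp Require Import boolp reals.
From mathcomp.real_closed Require Import complex.
From mathcomp Require Import ring lra zify.
Set Implicit Arguments. Unset Strict Implicit. Unset Printing Implicit Defensive.
Import Order.TTheory GRing.Theory Num.Theory.
Local Open Scope ring_scope.

(* For [Z] with orthonormal columns, [|X - Z L^T|_F^2 = tr (X^T X) - 2 tr (Z^T Y) + tr (L L^T)]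
   with [Y = X L], so everything hinges on the maximum of [tr (Z^T Y)].  Diagonalising
   [Y^T Y = Q^T diag(d) Q], the columns of [Y Q^T] are orthogonal with squared norms [d_i];
   Cauchy-Schwarz column by column bounds [tr (Z^T Y)] by [sum_i sqrt d_i], and normalising
   the nonzero columns of [Y Q^T], completed to an orthonormal family, attains the bound.
   With [S = sqrt (X^T X)] one has [S L L^T S = (S L) (S L)^T] and [(S L)^T (S L) = Y^T Y],
   so [tr sqrt (S L L^T S)] is the same [sum_i sqrt d_i]. *)

Section RealSpectral.
Variable R : rcfType.

Local Notation Remx := (map_mx (@complex.Re R)).
Local Notation Immx := (map_mx (@complex.Im R)).

Lemma sum_sqr_eq0 (I : finType) (f : I -> R) : \sum_i f i ^+ 2 = 0 -> forall i, f i = 0.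
Proof.
move=> /psumr_eq0P f0 i; apply/eqP; rewrite -sqrf_eq0 f0 //.
by move=> j _; exact: sqr_ge0.
Qed.

Lemma sqnorm_rowE m (u : 'rV[R]_m) : (u *m u^T) 0 0 = \sum_k u 0 k ^+ 2.
Proof. by rewrite mxE; apply: eq_bigr => k _; rewrite mxE expr2. Qed.

Lemma sqnorm_row_ge0 m (u : 'rV[R]_m) : 0 <= (u *m u^T) 0 0.
Proof. by rewrite sqnorm_rowE; apply: sumr_ge0 => k _; exact: sqr_ge0. Qed.

Lemma sqnorm_row_eq0 m (u : 'rV[R]_m) : ((u *m u^T) 0 0 == 0) = (u == 0).
Proof.
apply/idP/idP => [/eqP|/eqP->]; last by rewrite mul0mx mxE.
by rewrite sqnorm_rowE => /sum_sqr_eq0 u0; apply/eqP/rowP => k; rewrite u0 mxE.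
Qed.

Lemma sqnorm_row_gt0 m (u : 'rV[R]_m) : u != 0 -> 0 < (u *m u^T) 0 0.
Proof. by rewrite lt_def sqnorm_row_eq0 sqnorm_row_ge0 andbT. Qed.

Lemma Remx_mul_real m n p (w : 'M[R[i]]_(m, n)) (A : 'M[R]_(n, p)) :
  Remx (w *m map_mx (real_complex R) A) = Remx w *m A.
Proof.
apply/matrixP => i j; rewrite !mxE raddf_sum; apply: eq_bigr => k _.
by rewrite !mxE; case: (w i k) => a b /=; rewrite mulr0 subr0.
Qed.

Lemma Immx_mul_real m n p (w : 'M[R[i]]_(m, n)) (A : 'M[R]_(n, p)) :
  Immx (w *m map_mx (real_complex R) A) = Immx w *m A.
Proof.
apply/matrixP => i j; rewrite !mxE raddf_sum; apply: eq_bigr => k _.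
by rewrite !mxE; case: (w i k) => a b /=; rewrite mulr0 add0r mulrC.
Qed.

Lemma Remx_scale m n (z : R[i]) (w : 'M[R[i]]_(m, n)) :
  Remx (z *: w) = complex.Re z *: Remx w - complex.Im z *: Immx w.
Proof. by apply/matrixP => i j; rewrite !mxE; case: z; case: (w i j). Qed.

Lemma Immx_scale m n (z : R[i]) (w : 'M[R[i]]_(m, n)) :
  Immx (z *: w) = complex.Im z *: Remx w + complex.Re z *: Immx w.
Proof.
by apply/matrixP => i j; rewrite !mxE; case: z => a b; case: (w i j) => c d /=; ring.
Qed.

Lemma symmetric_rotation_eq0 n (A : 'M[R]_n) (x y : 'rV_n) a b :
  A^T = A -> x *m A = a *: x - b *: y -> y *m A = b *: x + a *: y ->
  (x != 0) || (y != 0) -> b = 0.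
Proof.
move=> sA xA yA xy_neq0.
(* Computing [x A y^T] in two ways gives [b (|x|^2 + |y|^2) = 0]. *)
have /matrixP/(_ 0 0) : x *m A *m y^T = x *m (y *m A)^T.
  by rewrite trmx_mul sA mulmxA.
rewrite xA yA mulmxBl raddfD /= mulmxDr ![(_ *: _)^T]linearZ /=.
rewrite -!scalemxAl -!scalemxAr.
have := sqnorm_row_ge0 x; have := sqnorm_row_ge0 y; move: xy_neq0.
rewrite -!sqnorm_row_eq0; set p := x *m x^T; set q := y *m y^T; set r := x *m y^T.
clearbody p q r; rewrite !mxE => pq_neq0 q_ge0 p_ge0 e.
have /eqP : b * (p 0 0 + q 0 0) = 0 by move: e; lra.
rewrite mulf_eq0 paddr_eq0 // => /orP[/eqP //|/andP[/eqP p0 /eqP q0]].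
by rewrite p0 q0 eqxx in pq_neq0.
Qed.

Lemma symmetric_eigenvector n (A : 'M[R]_n.+1) : A^T = A ->
  exists a (x : 'rV[R]_n.+1), x != 0 /\ x *m A = a *: x.
Proof.
move=> sA; pose Ac := map_mx (real_complex R) A.
have [z /eigenvalueP[w wA w_neq0]] : exists z, eigenvalue Ac z.
  have /closed_rootP[z rz] : size (char_poly Ac) != 1%N by rewrite size_char_poly.
  by exists z; rewrite eigenvalue_root_char.
have xA : Remx w *m A = complex.Re z *: Remx w - complex.Im z *: Immx w.
  by rewrite -Remx_mul_real wA Remx_scale.
have yA : Immx w *m A = complex.Im z *: Remx w + complex.Re z *: Immx w.
  by rewrite -Immx_mul_real wA Immx_scale.
have xy_neq0 : (Remx w != 0) || (Immx w != 0).
  apply: contraNT w_neq0; rewrite negb_or !negbK => /andP[/eqP/matrixP x0 /eqP/matrixP y0].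
  apply/eqP/matrixP => i j; move: (x0 i j) (y0 i j).
  by rewrite !mxE; case: (w i j) => u v /= -> ->.
have b0 := symmetric_rotation_eq0 sA xA yA xy_neq0.
rewrite b0 scale0r subr0 in xA; rewrite b0 scale0r add0r in yA.
by case/orP: xy_neq0 => ?; [exists (complex.Re z), (Remx w) | exists (complex.Re z), (Immx w)].
Qed.

Lemma normalize_row m (u : 'rV[R]_m) : u != 0 ->
  let v := (Num.sqrt ((u *m u^T) 0 0))^-1 *: u in v *m v^T = 1%:M.
Proof.
move=> /sqnorm_row_gt0 u_gt0 /=; set s := (u *m u^T) 0 0 in u_gt0 *.
rewrite -scalemxAl linearZ -scalemxAr /= scalerA (mx11_scalar (u *m u^T)) -/s.
by rewrite scale_scalar_mx -invfM -expr2 sqr_sqrtr ?ltW // mulVf // gt_eqF.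
Qed.

Lemma mulmx_tr_row m p n (M : 'M[R]_(m, n)) (N : 'M[R]_(p, n)) i j :
  (M *m N^T) i j = (row i M *m (row j N)^T) 0 0.
Proof. by rewrite !mxE; apply: eq_bigr => c _; rewrite !mxE. Qed.

Lemma unit_row_orthogonal m n (W : 'M[R]_(m, n)) : (m < n)%N ->
  exists v : 'rV[R]_n, v *m v^T = 1%:M /\ W *m v^T = 0.
Proof.
move=> lt_mn; pose u := nz_row (kermx W^T).
have u_neq0 : u != 0.
  rewrite nz_row_eq0 -mxrank_eq0 mxrank_ker mxrank_tr subn_eq0 -ltnNge.
  exact: leq_ltn_trans (rank_leq_row W) lt_mn.
have uW : u *m W^T = 0 by apply/sub_kermxP; exact: nz_row_sub.
exists ((Num.sqrt ((u *m u^T) 0 0))^-1 *: u); split; first exact: normalize_row.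
by rewrite linearZ /= -scalemxAr -[W]trmxK -trmx_mul uW trmx0 scaler0.
Qed.

Lemma orthonormal_rows_extend k n (Z : 'M[R]_(k, n)) (S : {set 'I_k}) : (k <= n)%N ->
  {in S &, forall i j, (Z *m Z^T) i j = (i == j)%:R} ->
  exists Z' : 'M_(k, n), {in S, forall i, row i Z' = row i Z} /\ Z' *m Z'^T = 1%:M.
Proof.
move=> le_kn; have [m] := ubnP #|~: S|; elim: m Z S => // m IH Z S ltSm ZS.
have [S_full|[j jC]] := set_0Vmem (~: S).
  have inS i : i \in S by apply/negPn; rewrite -in_setC S_full inE.
  by exists Z; split=> //; apply/matrixP => i1 i2; rewrite ZS ?mxE.
have jS : j \notin S by rewrite -in_setC.
pose W := \matrix_(i < #|S|) row (enum_val i) Z.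
have [|v [vv Wv]] := @unit_row_orthogonal _ _ W.
  have : (0 < #|~: S|)%N by apply/card_gt0P; exists j.
  by move: (cardsC S); rewrite card_ord; lia.
have vS i : i \in S -> (row i Z *m v^T) 0 0 = 0.
  move=> iS; have -> : row i Z = row (enum_rank_in iS i) W by rewrite rowK enum_rankK_in.
  by rewrite -row_mul Wv !mxE.
pose Z1 := \matrix_i (if i == j then v else row i Z).
have Z1S : {in S, forall i, row i Z1 = row i Z}.
  by move=> i iS; rewrite rowK; case: eqP iS jS => // -> ->.
have Z1S' : {in j |: S &, forall i1 i2, (Z1 *m Z1^T) i1 i2 = (i1 == i2)%:R}.
  have vS' i : i \in S -> (v *m (row i Z)^T) 0 0 = 0.
    by move=> iS; rewrite -[v *m _]trmxK trmx_mul trmxK mxE vS.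
  move=> i1 i2; rewrite mulmx_tr_row !rowK !inE.
  have [->|i1j] /= := eqVneq i1 j; have [->|i2j] /= := eqVneq i2 j.
  - by rewrite vv !mxE eqxx.
  - by move=> _ /vS' ->.
  - by move=> /vS -> _; rewrite (negPf i1j).
  - by move=> i1S i2S; rewrite -mulmx_tr_row ZS.
have [|Z' [Z'S Z'Z']] := IH Z1 (j |: S) _ Z1S'.
  have -> : ~: (j |: S) = ~: S :\ j by apply/setP => i; rewrite !inE negb_or andbC.
  by move: ltSm; rewrite (cardsD1 j (~: S)) jC add1n ltnS.
by exists Z'; split=> // i iS; rewrite Z'S ?Z1S // inE iS orbT.
Qed.

Lemma orthogonal_completion n (u : 'rV[R]_n.+1) : u *m u^T = 1%:M ->
  exists Q2 : 'M[R]_(n, n.+1), col_mx u Q2 *m (col_mx u Q2)^T = 1%:M.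
Proof.
move=> uu; pose Z : 'M[R]_(1 + n, n.+1) := \matrix_i (if i == 0 then u else 0).
have Z0 : row 0 Z = u by rewrite rowK eqxx.
have [|Z' [Z'Z Z'Z']] := @orthonormal_rows_extend _ _ Z [set 0] (leqnn _).
  by move=> i j; rewrite !inE => /eqP -> /eqP ->; rewrite mulmx_tr_row Z0 uu mxE.
exists (dsubmx Z'); suff -> : col_mx u (dsubmx Z') = Z' by [].
rewrite -[RHS]vsubmxK; congr col_mx; apply/rowP => c.
have -> : u 0 c = row 0 Z' 0 c by rewrite Z'Z ?inE // Z0.
by rewrite !mxE; congr (Z' _ c); exact: val_inj.
Qed.

Lemma symmetric_deflate n (A : 'M[R]_n.+1) (u : 'rV_n.+1) (Q2 : 'M_(n, n.+1)) a :
  A^T = A -> u *m A = a *: u -> col_mx u Q2 *m (col_mx u Q2)^T = 1%:M ->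
  col_mx u Q2 *m A *m (col_mx u Q2)^T = block_mx a%:M 0 0 (Q2 *m A *m Q2^T).
Proof.
move=> sA uA; rewrite tr_col_mx mul_col_row (scalar_mx_block 1 n).
case/eq_block_mx => uu uQ2 Q2u _.
have Q2A : Q2 *m A *m u^T = 0.
  by rewrite -mulmxA -[A]sA -trmx_mul uA linearZ -scalemxAr Q2u scaler0.
rewrite mul_col_mx mul_col_row uA -!scalemxAl uu uQ2 Q2A scaler0.
by rewrite scale_scalar_mx mulr1.
Qed.

Lemma symmetric_spectral n (A : 'M[R]_n) : A^T = A ->
  exists (Q : 'M[R]_n) (d : 'rV[R]_n), Q *m Q^T = 1%:M /\ A = Q^T *m diag_mx d *m Q.
Proof.
elim: n A => [|n IH] A sA.
  by exists 1%:M, 0; split; [rewrite trmx1 mulmx1|apply/matrixP => -[]].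
have [a [x [x_neq0 xA]]] := symmetric_eigenvector sA.
set u := (Num.sqrt ((x *m x^T) 0 0))^-1 *: x.
have uu : u *m u^T = 1%:M := normalize_row x_neq0.
have uA : u *m A = a *: u by rewrite -scalemxAl xA !scalerA mulrC.
have [Q2 CC] := orthogonal_completion uu; set C := col_mx u Q2 in CC.
have CAC := symmetric_deflate sA uA CC; rewrite -/C in CAC.
have [|Q' [d' [Q'Q' eA']]] := IH (Q2 *m A *m Q2^T).
  by rewrite !trmx_mul trmxK sA mulmxA.
pose P : 'M[R]_(1 + n) := block_mx 1%:M 0 0 Q'.
have PP : P *m P^T = 1%:M.
  rewrite /P tr_block_mx mulmx_block !trmx0 !mulmx0 !mul0mx !addr0 add0r.
  by rewrite trmx1 mulmx1 Q'Q' -scalar_mx_block.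
exists (P *m C), (row_mx a%:M d'); split.
  by rewrite trmx_mul mulmxA -(mulmxA P) CC mulmx1 PP.
have CtC : C^T *m C = 1%:M := mulmx1C CC.
have -> : A = C^T *m (C *m A *m C^T) *m C.
  by rewrite !mulmxA CtC mul1mx -mulmxA CtC mulmx1.
have -> : C *m A *m C^T = P^T *m diag_mx (row_mx a%:M d') *m P.
  rewrite CAC eA' /P tr_block_mx diag_mx_row !mulmx_block !trmx0 trmx1.
  rewrite !(mulmx0, mul0mx, mulmx1, mul1mx, addr0, add0r); congr block_mx.
  by apply/matrixP => i j; rewrite !ord1 !mxE.
by rewrite trmx_mul !mulmxA.
Qed.

End RealSpectral.

Section NuclearNorm.
Variable R : rcfType.

Lemma divr_sqrt (x : R) : 0 <= x -> x / Num.sqrt x = Num.sqrt x.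
Proof.
move=> x_ge0; have [->|x_neq0] := eqVneq x 0; first by rewrite mul0r sqrtr0.
by rewrite -{1}(sqr_sqrtr x_ge0) expr2 mulfK // sqrtr_eq0 -ltNge lt_def x_neq0.
Qed.

Lemma sum_mul_le_sqrt (I : finType) (a b : I -> R) :
  \sum_c a c ^+ 2 = 1 -> \sum_c a c * b c <= Num.sqrt (\sum_c b c ^+ 2).
Proof.
move=> a1; set s := Num.sqrt _.
have b2_ge0 : 0 <= \sum_c b c ^+ 2 by apply: sumr_ge0 => c _; exact: sqr_ge0.
have [s0|s_neq0] := eqVneq s 0.
  have b0 : \sum_c b c ^+ 2 = 0 by apply/le_anti; rewrite b2_ge0 -sqrtr_eq0 -/s s0 eqxx.
  by rewrite s0 big1 // => c _; rewrite (sum_sqr_eq0 b0) mulr0.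
have s_gt0 : 0 < s by rewrite lt_def s_neq0 sqrtr_ge0.
have ss : s ^+ 2 = \sum_c b c ^+ 2 by rewrite sqr_sqrtr.
(* [2 s a b <= s^2 a^2 + b^2], summed over the unit vector [a] *)
have : (\sum_c a c * b c) * (2 * s) <= \sum_c (s ^+ 2 * a c ^+ 2 + b c ^+ 2).
  rewrite mulr_suml; apply: ler_sum => c _.
  by rewrite -subr_ge0 (_ : _ - _ = (s * a c - b c) ^+ 2) ?sqr_ge0 //; ring.
rewrite big_split /= -mulr_sumr a1 mulr1 -ss; nra.
Qed.

Lemma mulmx_trlE m n p (A : 'M[R]_(m, n)) (B : 'M[R]_(m, p)) i j :
  (A^T *m B) i j = \sum_c A c i * B c j.
Proof. by rewrite mxE; apply: eq_bigr => c _; rewrite mxE. Qed.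

Lemma gram_rotate n k (Y : 'M[R]_(n, k)) (Q D : 'M[R]_k) :
  Q *m Q^T = 1%:M -> Y^T *m Y = Q^T *m D *m Q -> (Y *m Q^T)^T *m (Y *m Q^T) = D.
Proof.
move=> QQ YY.
by rewrite trmx_mul trmxK -mulmxA (mulmxA Y^T) YY !mulmxA QQ mul1mx -mulmxA QQ mulmx1.
Qed.

Section DiagonalGram.
Variables (p k : nat) (F : 'M[R]_(p, k)) (d : 'rV[R]_k).
Hypothesis FF : F^T *m F = diag_mx d.

Lemma gram_diag_sqr i : \sum_c F c i ^+ 2 = d 0 i.
Proof.
move/matrixP: FF => /(_ i i); rewrite mulmx_trlE mxE eqxx mulr1n => <-.
by apply: eq_bigr => c _; rewrite expr2.
Qed.

Lemma gram_diag_ge0 i : 0 <= d 0 i.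
Proof. by rewrite -gram_diag_sqr; apply: sumr_ge0 => c _; exact: sqr_ge0. Qed.

Lemma gram_diag_col_eq0 i c : d 0 i = 0 -> F c i = 0.
Proof. by rewrite -gram_diag_sqr => /sum_sqr_eq0. Qed.

End DiagonalGram.

Lemma tr_orthonormal_le n k (Y Z : 'M[R]_(n, k)) (Q : 'M[R]_k) d :
  Q *m Q^T = 1%:M -> Y^T *m Y = Q^T *m diag_mx d *m Q -> Z^T *m Z = 1%:M ->
  \tr (Z^T *m Y) <= \sum_i Num.sqrt (d 0 i).
Proof.
move=> QQ YY ZZ; have QtQ := mulmx1C QQ.
have FF := gram_rotate QQ YY; set F := Y *m Q^T in FF.
have WW : (Z *m Q^T)^T *m (Z *m Q^T) = diag_mx (const_mx 1).
  by rewrite diag_const_mx (gram_rotate (D := 1%:M) QQ) // mulmx1 QtQ.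
set W := Z *m Q^T in WW.
have <- : \tr (W^T *m F) = \tr (Z^T *m Y).
  by rewrite /W /F trmx_mul trmxK !mulmxA mxtrace_mulC !mulmxA QtQ mul1mx.
rewrite /mxtrace; apply: ler_sum => i _; rewrite mulmx_trlE -(gram_diag_sqr FF).
by apply: sum_mul_le_sqrt; rewrite (gram_diag_sqr WW) mxE.
Qed.

Lemma tr_orthonormal_attained n k (Y : 'M[R]_(n, k)) (Q : 'M[R]_k) d : (k <= n)%N ->
  Q *m Q^T = 1%:M -> Y^T *m Y = Q^T *m diag_mx d *m Q ->
  exists Z : 'M[R]_(n, k), Z^T *m Z = 1%:M /\ \tr (Z^T *m Y) = \sum_i Num.sqrt (d 0 i).
Proof.
move=> le_kn QQ YY; have QtQ := mulmx1C QQ.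
have FF := gram_rotate QQ YY; set F := Y *m Q^T in FF.
pose W0 : 'M[R]_(k, n) := \matrix_(i, c) ((Num.sqrt (d 0 i))^-1 * F c i).
pose S := [set i | d 0 i != 0].
have W0S : {in S &, forall i j, (W0 *m W0^T) i j = (i == j)%:R}.
  move=> i j; rewrite !inE => di dj.
  transitivity ((Num.sqrt (d 0 i))^-1 * (Num.sqrt (d 0 j))^-1 * (F^T *m F) i j).
    by rewrite mxE mulmx_trlE mulr_sumr; apply: eq_bigr => c _; rewrite !mxE; ring.
  rewrite FF mxE; case: eqVneq => [<-|_]; last by rewrite mulr0n mulr0.
  by rewrite mulr1n -invfM -expr2 sqr_sqrtr ?(gram_diag_ge0 FF) // mulVf.
have [W [WS WW]] := orthonormal_rows_extend le_kn W0S.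
exists (W^T *m Q); split.
  by rewrite trmx_mul trmxK -mulmxA (mulmxA W) WW mul1mx QtQ.
rewrite trmx_mul trmxK -mulmxA mxtrace_mulC -mulmxA -/F /mxtrace.
apply: eq_bigr => i _; rewrite mxE.
have [di|di] := eqVneq (d 0 i) 0.
  by rewrite di sqrtr0 big1 // => c _; rewrite (gram_diag_col_eq0 FF) // mulr0.
transitivity ((Num.sqrt (d 0 i))^-1 * \sum_c F c i ^+ 2).
  rewrite mulr_sumr; apply: eq_bigr => c _.
  have -> : W i c = row i W 0 c by rewrite mxE.
  by rewrite WS ?inE // !mxE; ring.
by rewrite (gram_diag_sqr FF) mulrC divr_sqrt ?(gram_diag_ge0 FF).
Qed.

End NuclearNorm.

Section PsdSqrt.
Variable R : realType.

Lemma quad_diag_mx n (w : 'cV[R]_n) (e : 'rV[R]_n) :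
  (w^T *m diag_mx e *m w) 0 0 = \sum_j e 0 j * w j 0 ^+ 2.
Proof. by rewrite mul_mx_diag mxE; apply: eq_bigr => j _; rewrite !mxE expr2 mulrCA mulrA. Qed.

Lemma psd_spectral n (A : 'M[R]_n) : psd A -> exists Q (d : 'rV_n),
  [/\ Q *m Q^T = 1%:M, A = Q^T *m diag_mx d *m Q & forall i, 0 <= d 0 i].
Proof.
case=> sA A_ge0; have [Q [d [QQ eA]]] := symmetric_spectral sA.
exists Q, d; split=> // i; have := A_ge0 (Q^T *m delta_mx i 0).
rewrite trmx_mul trmxK trmx_delta eA !mulmxA -(mulmxA _ Q Q^T) QQ mulmx1.
by rewrite -(mulmxA _ Q Q^T) QQ mulmx1 -rowE -colE !mxE eqxx mulr1n.
Qed.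

Lemma psd_sqrt_exists n (A : 'M[R]_n) : psd A -> exists B, psd B /\ B *m B = A.
Proof.
move=> /psd_spectral [Q [d [QQ eA d_ge0]]].
pose e : 'rV[R]_n := \row_j Num.sqrt (d 0 j).
exists (Q^T *m diag_mx e *m Q); split; first split.
- by rewrite !trmx_mul trmxK tr_diag_mx mulmxA.
- move=> v; have -> : v^T *m (Q^T *m diag_mx e *m Q) *m v =
                     (Q *m v)^T *m diag_mx e *m (Q *m v) by rewrite trmx_mul !mulmxA.
  by rewrite quad_diag_mx; apply: sumr_ge0 => j _; rewrite mxE mulr_ge0 ?sqrtr_ge0 ?sqr_ge0.
- rewrite !mulmxA -(mulmxA _ Q Q^T) QQ mulmx1 -(mulmxA Q^T) mulmx_diag eA.
  by congr (_ *m diag_mx _ *m _); apply/rowP => j; rewrite !mxE -expr2 sqr_sqrtr.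
Qed.

Lemma psd_sqrtP n (A : 'M[R]_n) : psd A -> psd (psd_sqrt A) /\ psd_sqrt A *m psd_sqrt A = A.
Proof.
move=> A_psd; rewrite /psd_sqrt; case: pselect => [h|]; first by case: cid.
by move/(_ (psd_sqrt_exists A_psd)).
Qed.

(* [r := B q - e q] satisfies [B r = - e r], and positivity of [B] forces [r = 0]
   (for [e = 0] directly: [|B q|^2 = q^T B^2 q = 0]). *)
Lemma psd_sqr_eigen n (B : 'M[R]_n) (q : 'cV[R]_n) e : psd B -> 0 <= e ->
  B *m (B *m q) = e ^+ 2 *: q -> B *m q = e *: q.
Proof.
move=> [sB B_ge0] e_ge0 BBq; set r := B *m q - e *: q.
have Br : B *m r = - (e *: r).
  by rewrite mulmxBr BBq -scalemxAr scalerBr scalerA -expr2 opprB.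
suff rr0 : (r^T *m r) 0 0 = 0.
  by apply/eqP; rewrite -subr_eq0 -/r -trmx_eq0 -sqnorm_row_eq0 trmxK rr0.
have rr_ge0 := sqnorm_row_ge0 r^T; rewrite trmxK in rr_ge0.
have [e0|e_neq0] := eqVneq e 0.
  have -> : r = B *m q by rewrite /r e0 scale0r subr0.
  by rewrite trmx_mul sB -mulmxA BBq e0 expr0n scale0r mulmx0 mxE.
have := B_ge0 r; rewrite -mulmxA Br mulmxN -scalemxAr mxE mxE oppr_ge0.
by rewrite pmulr_rle0 ?lt_def ?e_neq0 // => rr_le0; apply/le_anti; rewrite rr_le0.
Qed.

Lemma psd_sqrt_unique n (B1 B2 : 'M[R]_n) : psd B1 -> psd B2 -> B1 *m B1 = B2 *m B2 -> B1 = B2.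
Proof.
move=> B1_psd B2_psd B11_22.
have [Q [d [QQ eB1 d_ge0]]] := psd_spectral B1_psd.
have B1Qt : B1 *m Q^T = Q^T *m diag_mx d by rewrite eB1 -mulmxA QQ mulmx1.
have eigen i : B1 *m (Q^T *m delta_mx i 0) = d 0 i *: (Q^T *m delta_mx i 0).
  rewrite mulmxA B1Qt -!mulmxA scalemxAr; congr (_ *m _).
  by apply/matrixP => a b; rewrite mul_diag_mx !mxE; case: eqVneq => [->|]; rewrite ?mulr0.
have col_eq i : col i (B1 *m Q^T) = col i (B2 *m Q^T).
  rewrite !colE -!mulmxA eigen (psd_sqr_eigen B2_psd (d_ge0 i)) //.
  by rewrite mulmxA -B11_22 -mulmxA eigen -scalemxAr eigen scalerA -expr2.
have : B1 *m Q^T = B2 *m Q^T.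
  by apply/matrixP => a b; move/matrixP: (col_eq b) => /(_ a 0); rewrite !mxE.
by move/(congr1 (mulmx^~ Q)); rewrite -!mulmxA (mulmx1C QQ) !mulmx1.
Qed.

Lemma psd_mulmx_tr p k (M : 'M[R]_(p, k)) : psd (M *m M^T).
Proof.
split=> [|v]; first by rewrite trmx_mul trmxK.
have -> : v^T *m (M *m M^T) *m v = (v^T *m M) *m (v^T *m M)^T by rewrite trmx_mul trmxK !mulmxA.
exact: sqnorm_row_ge0.
Qed.

Lemma psd_sqrt_gram_diag p k (F : 'M[R]_(p, k)) (d : 'rV[R]_k) : F^T *m F = diag_mx d ->
  psd_sqrt (F *m F^T) = F *m diag_mx (\row_i (Num.sqrt (d 0 i))^-1) *m F^T.
Proof.
move=> FF; set E := diag_mx _; have [T_psd TT] := psd_sqrtP (psd_mulmx_tr F).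
apply: psd_sqrt_unique => //; first split.
- by rewrite !trmx_mul trmxK tr_diag_mx mulmxA.
- move=> v; have -> : v^T *m (F *m E *m F^T) *m v = (F^T *m v)^T *m E *m (F^T *m v).
    by rewrite trmx_mul trmxK !mulmxA.
  rewrite quad_diag_mx; apply: sumr_ge0 => j _.
  by rewrite mxE mulr_ge0 ?sqr_ge0 // invr_ge0 sqrtr_ge0.
rewrite TT !mulmxA -(mulmxA _ F^T F) FF; congr (_ *m _).
rewrite -!mulmxA !mulmx_diag mul_mx_diag; apply/matrixP => c i; rewrite !mxE.
have [d0|d_neq0] := eqVneq (d 0 i) 0; first by rewrite (gram_diag_col_eq0 FF) ?mul0r.
rewrite divr_sqrt ?(gram_diag_ge0 FF) // mulVf ?mulr1 //.
by rewrite sqrtr_eq0 -ltNge lt_def d_neq0 (gram_diag_ge0 FF).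
Qed.

Lemma tr_psd_sqrt_mulmx_tr p k (M : 'M[R]_(p, k)) (Q : 'M[R]_k) d :
  Q *m Q^T = 1%:M -> M^T *m M = Q^T *m diag_mx d *m Q ->
  \tr (psd_sqrt (M *m M^T)) = \sum_i Num.sqrt (d 0 i).
Proof.
move=> QQ MM; have FF := gram_rotate QQ MM.
have -> : M *m M^T = (M *m Q^T) *m (M *m Q^T)^T.
  by rewrite trmx_mul trmxK mulmxA -(mulmxA M) (mulmx1C QQ) mulmx1.
rewrite (psd_sqrt_gram_diag FF) mxtrace_mulC mulmxA FF mulmx_diag mxtrace_diag.
by apply: eq_bigr => i _; rewrite !mxE divr_sqrt ?(gram_diag_ge0 FF).
Qed.

Lemma tr_psd_sqrt_sandwich n p k (X : 'M[R]_(n, p)) (L : 'M[R]_(p, k)) (Q : 'M[R]_k) d :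
  Q *m Q^T = 1%:M -> (X *m L)^T *m (X *m L) = Q^T *m diag_mx d *m Q ->
  \tr (psd_sqrt (psd_sqrt (X^T *m X) *m (L *m L^T) *m psd_sqrt (X^T *m X)))
    = \sum_i Num.sqrt (d 0 i).
Proof.
move=> QQ YY; have := psd_mulmx_tr X^T; rewrite trmxK => /psd_sqrtP[[sS _] SS].
set S := psd_sqrt _ in sS SS *.
have -> : S *m (L *m L^T) *m S = (S *m L) *m (S *m L)^T by rewrite trmx_mul sS !mulmxA.
apply: tr_psd_sqrt_mulmx_tr QQ _.
by rewrite -YY !trmx_mul sS !mulmxA -(mulmxA _ S S) SS !mulmxA.
Qed.

End PsdSqrt.

Section Frobenius.
Variable R : realType.

Lemma frob2_tr p q (A : 'M[R]_(p, q)) : frob2 A = \tr (A^T *m A).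
Proof.
rewrite /frob2 /mxtrace exchange_big; apply: eq_bigr => k _; rewrite mulmx_trlE.
by apply: eq_bigr => i _; rewrite expr2.
Qed.

Lemma frob2_ge0 p q (A : 'M[R]_(p, q)) : 0 <= frob2 A.
Proof. by apply: sumr_ge0 => i _; apply: sumr_ge0 => k _; exact: sqr_ge0. Qed.

Lemma frob2_sub_orthonormal n p k (X : 'M[R]_(n, p)) (Z : 'M[R]_(n, k)) (L : 'M[R]_(p, k)) :
  Z^T *m Z = 1%:M ->
  frob2 (X - Z *m L^T) = \tr (X^T *m X) - 2 * \tr (Z^T *m (X *m L)) + \tr (L *m L^T).
Proof.
move=> ZZ; rewrite frob2_tr [(X - _)^T]raddfB /= trmx_mul trmxK mulmxBl !mulmxBr !raddfB /=.
have t1 : \tr (X^T *m (Z *m L^T)) = \tr (Z^T *m (X *m L)).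
  by rewrite -mxtrace_tr !trmx_mul !trmxK -mulmxA mxtrace_mulC -mulmxA.
have t2 : \tr (L *m Z^T *m X) = \tr (Z^T *m (X *m L)).
  by rewrite -mulmxA mxtrace_mulC -mulmxA.
have t3 : L *m Z^T *m (Z *m L^T) = L *m L^T by rewrite mulmxA -(mulmxA L) ZZ mulmx1.
by rewrite t1 t2 t3; ring.
Qed.

End Frobenius.

Theorem lemma1 (R : realType) (N P K : nat) (X : 'M[R]_(N, P)) (L : 'M[R]_(P, K))
    (hK0 : (0 < K)%N) (hK : (K <= minn N P)%N) :
  (exists Z : 'M[R]_(N, K), orthonormal_cols Z /\
       frob2 (X - Z *m L^T) = bw_dist (X^T *m X) (L *m L^T) ^+ 2) /\
  (forall Z : 'M[R]_(N, K), orthonormal_cols Z ->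
       bw_dist (X^T *m X) (L *m L^T) ^+ 2 <= frob2 (X - Z *m L^T)).
Proof.
have le_KN : (K <= N)%N by move: hK; rewrite leq_min => /andP[].
have [|Q [d [QQ YY]]] := @symmetric_spectral _ _ ((X *m L)^T *m (X *m L)).
  by rewrite trmx_mul trmxK.
have [Z0 [Z0Z0 trZ0]] := tr_orthonormal_attained le_KN QQ YY.
have bw : bw_dist (X^T *m X) (L *m L^T) ^+ 2 =
    \tr (X^T *m X) - 2 * \sum_i Num.sqrt (d 0 i) + \tr (L *m L^T).
  rewrite /bw_dist (tr_psd_sqrt_sandwich QQ YY) sqr_sqrtr //.
  by rewrite -trZ0 -frob2_sub_orthonormal // frob2_ge0.
split=> [|Z ZZ]; first by exists Z0; rewrite bw frob2_sub_orthonormal // trZ0.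
by rewrite bw frob2_sub_orthonormal //; have := tr_orthonormal_le QQ YY ZZ; lra.
Qed.
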